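(* Let $\mathbf{M}=(c_{i,j})_{i,j\ge0}$ be a positive definite moment matrix, i.e. $c_{i,j}=\int z^i\bar z^j d\mu$ for some positive Borel measure $\mu$ on $\mathbb{C}$ with infinite support and finite moments, and let $\widehat{\mathbf{M}}=(c_{i+1,j+1})_{i,j\ge0}$ be the matrix obtained by removing the first row and first column of $\mathbf{M}$. Then $$\beta(\widehat{\mathbf{M}},\mathbf{M})=\lim_{n\to\infty} c_{n,n}^{1/n}.$$
   Context: For infinite Hermitian positive semidefinite matrices $\mathbf{A},\mathbf{B}$ with $\mathbf{B}$ positive definite, $\beta(\mathbf{A},\mathbf{B})=\sup\{v\mathbf{A}v^*/v\mathbf{B}v^*: v\in c_{00}\setminus\{0\}\}\in(-\infty,\infty]$, equivalently the limit as $n\to\infty$ of the largest generalized eigenvalue of the $(n+1)\times(n+1)$ truncation $\mathbf{A}_n$ with respect to $\mathbf{B}_n$; $c_{00}$ is the space of finitely supported complex row sequences. *)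

From HB Require Import structures.
From mathcomp Require Import all_boot all_order all_algebra.
From mathcomp Require Import all_classical all_reals all_analysis.
From mathcomp Require Import complex.
Set Implicit Arguments. Unset Strict Implicit. Unset Printing Implicit Defensive.
Import Order.TTheory GRing.Theory Num.Theory.
Import numFieldNormedType.Exports.
Local Open Scope classical_set_scope.
Local Open Scope ring_scope.

(* The complex plane C is modelled as R * R (Borel sigma-algebra of R^2 =
   product of the Borel sigma-algebras), the point p being p.1 + i p.2. *)
Definition zc {R : realType} (p : R * R) : R[i] := Complex p.1 p.2.

Definition modz {R : realType} (p : R * R) : R := Num.sqrt (p.1 ^+ 2 + p.2 ^+ 2).

Definition msupport {R : realType}
  (mu : {measure set (R * R) -> \bar R}) : set (R * R) :=
  [set p | forall e : R, 0 < e -> (0 < mu (ball p e))%E].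

Definition finite_moments {R : realType}
  (mu : {measure set (R * R) -> \bar R}) : Prop :=
  forall k : nat, mu.-integrable setT (fun p => ((modz p) ^+ k)%:E).

(* c_{i,j} = int z^i conj(z)^j dmu, as the complex number whose real and
   imaginary parts are the integrals of the real and imaginary parts *)
Definition moment {R : realType}
  (mu : {measure set (R * R) -> \bar R}) (i j : nat) : R[i] :=
  Complex (Rintegral mu setT (fun p => complex.Re (zc p ^+ i * conjc (zc p ^+ j))))
          (Rintegral mu setT (fun p => complex.Im (zc p ^+ i * conjc (zc p ^+ j)))).

Definition infmx (R : realType) := nat -> nat -> R[i].

Definition moment_matrix {R : realType}
  (mu : {measure set (R * R) -> \bar R}) : infmx R := moment mu.

Definition shift_mx {R : realType} (A : infmx R) : infmx R :=
  fun i j => A i.+1 j.+1.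

(* v A v^* for v supported in [0, N) *)
Definition qform {R : realType} (A : infmx R) (v : nat -> R[i]) (N : nat) : R[i] :=
  \sum_(i < N) \sum_(j < N) v i * A i j * conjc (v j).

(* beta(A,B) = sup { vAv^*/vBv^* : v in c00, v <> 0 } (as an extended real) *)
Definition beta {R : realType} (A B : infmx R) : \bar R :=
  ereal_sup [set r : \bar R | exists (N : nat) (v : nat -> R[i]),
     (forall i, (N <= i)%N -> v i = 0) /\ (exists i, v i != 0) /\
     r = ((complex.Re (qform A v N)) / (complex.Re (qform B v N)))%:E].

From Pilot Require Import Defs.
From HB Require Import structures.
From mathcomp Require Import all_boot all_order all_algebra.
From mathcomp Require Import all_classical all_reals all_analysis.
From mathcomp Require Import complex.
From mathcomp Require Import measurable_realfun ring lra.
Set Implicit Arguments. Unset Strict Implicit. Unset Printing Implicit Defensive.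
Import Order.TTheory GRing.Theory Num.Theory.
Import numFieldNormedType.Exports.
Local Open Scope classical_set_scope.
Local Open Scope ring_scope.

(* With p_v(z) = sum_i v_i z^i, the two quadratic forms are integrals against mu:
   v M v^* = int |p_v|^2 dmu and v Mhat v^* = int |z|^2 |p_v|^2 dmu.  Hence
   beta <= t as soon as |z|^2 <= t mu-almost everywhere, so every t < beta has
   mu(|z|^2 > t) > 0 and c_{n,n} = int |z|^{2n} dmu >= t^n mu(|z|^2 > t).  On
   the other side, testing beta on the unit vectors gives c_{k+1,k+1} <= beta c_{k,k},
   hence c_{n,n} <= c_{0,0} beta^n.  Taking n-th roots squeezes c_{n,n}^{1/n}
   between t and beta; infinite support makes every c_{n,n} positive. *)

Section ComplexNorm.
Variable R : rcfType.
Implicit Types u : R[i].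

Lemma normcJ u : Normc.normc (conjc u) = Normc.normc u.
Proof. by case: u => a b /=; rewrite sqrrN. Qed.

Lemma normcX u n : Normc.normc (u ^+ n) = Normc.normc u ^+ n.
Proof.
elim: n => [|n IH]; first by rewrite !expr0 Normc.normc1.
by rewrite !exprS Normc.normcM IH.
Qed.

Lemma normc_ge_Re u : `|complex.Re u| <= Normc.normc u.
Proof.
case: u => a b /=; rewrite -sqrtr_sqr ler_sqrt ?addr_ge0 ?sqr_ge0 //.
by rewrite lerDl sqr_ge0.
Qed.

Lemma normc_ge_Im u : `|complex.Im u| <= Normc.normc u.
Proof.
case: u => a b /=; rewrite -sqrtr_sqr ler_sqrt ?addr_ge0 ?sqr_ge0 //.
by rewrite lerDr sqr_ge0.
Qed.

Lemma Re_mulcJ u : complex.Re (u * conjc u) = Normc.normc u ^+ 2.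
Proof. by case: u => a b /=; rewrite sqr_sqrtr ?addr_ge0 ?sqr_ge0 //; ring. Qed.

Lemma Re_realcM (x : R) u : complex.Re ((x%:C)%C * u) = x * complex.Re u.
Proof. by case: u => a b /=; ring. Qed.

Lemma Re_sum I (s : seq I) (F : I -> R[i]) :
  complex.Re (\sum_(i <- s) F i) = \sum_(i <- s) complex.Re (F i).
Proof. by apply: big_morph => // -[? ?] [? ?]. Qed.

End ComplexNorm.

Section Monomials.
Variable R : realType.
Implicit Types p : R * R.

Definition sqmod p : R := p.1 ^+ 2 + p.2 ^+ 2.

Definition zmon (i j : nat) p : R[i] := zc p ^+ i * conjc (zc p ^+ j).

Lemma sqmod_ge0 p : 0 <= sqmod p.
Proof. by rewrite addr_ge0 ?sqr_ge0. Qed.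

Lemma mul_zcJ p : zc p * conjc (zc p) = ((sqmod p)%:C)%C.
Proof. by case: p => a b; rewrite /zc /sqmod /=; congr (Complex _ _); ring. Qed.

Lemma zmonSS i j p : zmon i.+1 j.+1 p = ((sqmod p)%:C)%C * zmon i j p.
Proof. by rewrite /zmon !exprS rmorphM -mul_zcJ; ring. Qed.

Lemma Re_zmon_diag k p : complex.Re (zmon k k p) = sqmod p ^+ k.
Proof.
elim: k => [|k IH]; first by rewrite /zmon !expr0 rmorph1 mulr1.
by rewrite zmonSS Re_realcM IH exprS.
Qed.

Lemma normc_zmon i j p : Normc.normc (zmon i j p) = Defs.modz p ^+ (i + j).
Proof. by rewrite Normc.normcM normcJ !normcX exprD. Qed.

End Monomials.

Section ComplexIntegration.
Context d (T : measurableType d) (R : realType).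
Variable mu : {measure set T -> \bar R}.
Implicit Types (u w : T -> R[i]) (f : T -> R).
Local Notation integrable f := (mu.-integrable setT (EFin \o f)).

Definition cmeasurable u :=
  measurable_fun setT (fun x => complex.Re (u x)) /\
  measurable_fun setT (fun x => complex.Im (u x)).

Definition cintegrable u :=
  integrable (fun x => complex.Re (u x)) /\ integrable (fun x => complex.Im (u x)).

Definition cRintegral u : R[i] :=
  Complex (Rintegral mu setT (fun x => complex.Re (u x)))
          (Rintegral mu setT (fun x => complex.Im (u x))).

Lemma cmeasurableM u w : cmeasurable u -> cmeasurable w ->
  cmeasurable (fun x => u x * w x).
Proof.
move=> [ur ui] [wr wi]; split.
- have -> : (fun x => complex.Re (u x * w x)) =
     ((fun x => complex.Re (u x)) \* (fun x => complex.Re (w x))) \-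
     ((fun x => complex.Im (u x)) \* (fun x => complex.Im (w x))).
    by apply/funext => x /=; case: (u x) => a b; case: (w x).
  by apply: measurable_realfun.measurable_funB;
     apply: measurable_realfun.measurable_funM.
- have -> : (fun x => complex.Im (u x * w x)) =
     ((fun x => complex.Re (u x)) \* (fun x => complex.Im (w x))) \+
     ((fun x => complex.Im (u x)) \* (fun x => complex.Re (w x))).
    by apply/funext => x /=; case: (u x) => a b; case: (w x).
  by apply: measurable_realfun.measurable_funD;
     apply: measurable_realfun.measurable_funM.
Qed.

Lemma cmeasurableX u n : cmeasurable u -> cmeasurable (fun x => u x ^+ n).
Proof.
move=> um; elim: n => [|n IH].
  by split; [rewrite (_ : (fun _ => _) = cst 1) | rewrite (_ : (fun _ => _) = cst 0)].
have [hr hi] := cmeasurableM um IH.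
by split; [apply: eq_measurable_fun hr|apply: eq_measurable_fun hi] => x _;
  rewrite exprS.
Qed.

Lemma cmeasurableJ u : cmeasurable u -> cmeasurable (fun x => conjc (u x)).
Proof.
move=> [ur ui]; split; first by apply: eq_measurable_fun ur => x _; case: (u x).
apply: (eq_measurable_fun (fun x => - complex.Im (u x))).
  by move=> x _; case: (u x).
exact: measurable_realfun.measurable_funN.
Qed.

Lemma cintegrable_normc_le u f : cmeasurable u -> integrable f ->
  (forall x, Normc.normc (u x) <= f x) -> cintegrable u.
Proof.
move=> [ur ui] fi uf.
have f0 x : 0 <= f x by apply: le_trans (uf x); case: (u x) => a b /=.
split; apply: (le_integrable measurableT _ _ fi) => [|x _].
- exact/measurable_EFinP.
- by rewrite /= lee_fin (ger0_norm (f0 x)) (le_trans (normc_ge_Re _)).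
- exact/measurable_EFinP.
- by rewrite /= lee_fin (ger0_norm (f0 x)) (le_trans (normc_ge_Im _)).
Qed.

Lemma integrableZl_EFin (k : R) f : integrable f -> integrable (fun x => k * f x).
Proof. by move=> /(integrableZl measurableT k); apply: (eq_integrable measurableT). Qed.

Lemma integrable_Re_mulc (a : R[i]) u : cintegrable u ->
  integrable (fun x => complex.Re (a * u x)).
Proof.
move=> [ur ui].
have := integrableB measurableT (integrableZl_EFin (complex.Re a) ur)
                                (integrableZl_EFin (complex.Im a) ui).
by apply: (eq_integrable measurableT) => x _ /=; case: a; case: (u x).
Qed.

Lemma Re_mul_cRintegral (a : R[i]) u : cintegrable u ->
  complex.Re (a * cRintegral u) = Rintegral mu setT (fun x => complex.Re (a * u x)).
Proof.
move=> [ur ui].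
have -> : Rintegral mu setT (fun x => complex.Re (a * u x)) =
    Rintegral mu setT (fun x => complex.Re a * complex.Re (u x) -
                                complex.Im a * complex.Im (u x)).
  by apply: eq_Rintegral => x _; case: a; case: (u x).
by rewrite RintegralB ?RintegralZl ?integrableZl_EFin //; case: a.
Qed.

Lemma integrable_sumr I (s : seq I) (h : I -> T -> R) :
  (forall i, integrable (h i)) -> integrable (fun x => \sum_(i <- s) h i x).
Proof.
move=> hi; have := integrable_sum measurableT s (P := xpredT)
  (h := fun i x => (h i x)%:E) (fun i _ => hi i).
by apply: (eq_integrable measurableT) => x _; rewrite /= sumEFin.
Qed.

Lemma Rintegral_sum I (s : seq I) (h : I -> T -> R) : (forall i, integrable (h i)) ->
  Rintegral mu setT (fun x => \sum_(i <- s) h i x) =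
  \sum_(i <- s) Rintegral mu setT (h i).
Proof.
move=> hi; elim: s => [|i s IH].
  by under eq_Rintegral do rewrite big_nil; rewrite Rintegral_cst // mul0r big_nil.
under eq_Rintegral do rewrite big_cons.
by rewrite RintegralD ?integrable_sumr // IH big_cons.
Qed.

Lemma Re_qformE (A : infmx R) v N : complex.Re (qform A v N) =
  \sum_(i < N) \sum_(j < N) complex.Re ((v i * conjc (v j)) * A i j).
Proof.
rewrite Re_sum; apply: eq_bigr => i _; rewrite Re_sum; apply: eq_bigr => j _.
by congr complex.Re; ring.
Qed.

Lemma integrable_Re_qform (g : nat -> nat -> T -> R[i]) v N :
  (forall i j, cintegrable (g i j)) ->
  integrable (fun x => complex.Re (qform (fun i j => g i j x) v N)).
Proof.
move=> gi; under eq_fun do rewrite Re_qformE.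
by do 2![apply: integrable_sumr => ?]; exact: integrable_Re_mulc.
Qed.

Lemma Re_qform_cRintegral (g : nat -> nat -> T -> R[i]) v N :
  (forall i j, cintegrable (g i j)) ->
  complex.Re (qform (fun i j => cRintegral (g i j)) v N) =
  Rintegral mu setT (fun x => complex.Re (qform (fun i j => g i j x) v N)).
Proof.
move=> gi; under eq_Rintegral do rewrite Re_qformE.
rewrite Re_qformE Rintegral_sum => [|i]; last first.
  by apply: integrable_sumr => j; exact: integrable_Re_mulc.
apply: eq_bigr => i _; rewrite Rintegral_sum => [|j]; last exact: integrable_Re_mulc.
by apply: eq_bigr => j _; rewrite Re_mul_cRintegral.
Qed.

Lemma ae_ge0_le_Rintegral f g : integrable f -> integrable g ->
  (forall x, 0 <= f x) -> (forall x, 0 <= g x) -> {ae mu, forall x, f x <= g x} ->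
  Rintegral mu setT f <= Rintegral mu setT g.
Proof.
move=> fi gi f0 g0 fg; apply: fine_le; try exact: integrable_fin_num.
apply: ae_ge0_le_integral.
- exact: measurableT.
- by move=> x _; rewrite lee_fin.
- exact: measurable_int fi.
- by move=> x _; rewrite lee_fin.
- exact: measurable_int gi.
- by near=> x => _; rewrite lee_fin; near: x.
Unshelve. all: by end_near.
Qed.

Lemma le_Rintegral_measure (A : set T) f c : measurable A -> mu A \is a fin_num ->
  integrable f -> (forall x, 0 <= f x) -> 0 <= c -> (forall x, A x -> c <= f x) ->
  c * fine (mu A) <= Rintegral mu setT f.
Proof.
move=> mA muA fi f0 c0 cf; rewrite -[c]/(fine c%:E) -fineM //.
apply: fine_le; [by rewrite fin_numM | exact: integrable_fin_num|].
rewrite -(integral_cst mu mA); apply: (@le_trans _ _ (\int[mu]_(x in A) (f x)%:E)%E).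
  apply: ge0_le_integral => //.
  exact: measurable_funS measurableT (subsetT _) (measurable_int _ fi).
apply: ge0_subset_integral => //; first exact: measurable_int fi.
by move=> x _; rewrite lee_fin.
Qed.

End ComplexIntegration.

Lemma qform_delta (R : realType) (A : infmx R) k :
  qform A (fun i => (i == k)%:R) k.+1 = A k k.
Proof.
rewrite /qform (bigD1 ord_max) //= (bigD1 ord_max) //= eqxx.
rewrite big1 ?addr0 => [|j]; last first.
  by rewrite -val_eqE /= => /negbTE ->; rewrite rmorph0 mulr0.
rewrite big1 ?addr0 => [|i]; last first.
  by rewrite -val_eqE /= => /negbTE ->; rewrite big1 // => j _; rewrite !mul0r.
by rewrite mul1r rmorph1 mulr1.
Qed.

Section MomentMatrix.
Variable R : realType.
Variable mu : {measure set (R * R) -> \bar R}.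
Hypothesis hmom : finite_moments mu.
Local Notation integrable f := (mu.-integrable setT (EFin \o f)).
Local Notation M := (moment_matrix mu).
Implicit Types (v : nat -> R[i]) (p : R * R).

Definition cpoly (v : nat -> R[i]) N (p : R * R) : R[i] := \sum_(i < N) v i * zc p ^+ i.

Definition level (t : R) : set (R * R) := [set p | t < sqmod p].

Lemma cmeasurable_zmon i j : cmeasurable (@zmon R i j).
Proof.
have mz : cmeasurable (@zc R) by split; [exact: measurable_fst | exact: measurable_snd].
exact: cmeasurableM (cmeasurableX _ mz) (cmeasurableJ (cmeasurableX _ mz)).
Qed.

Lemma cintegrable_zmon i j : cintegrable mu (@zmon R i j).
Proof.
apply: cintegrable_normc_le (cmeasurable_zmon i j) (hmom (i + j)) _ => p.
by rewrite normc_zmon.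
Qed.

Lemma qform_zmon v N p :
  qform (fun i j => zmon i j p) v N = cpoly v N p * conjc (cpoly v N p).
Proof.
rewrite /cpoly rmorph_sum mulr_suml; apply: eq_bigr => i _.
by rewrite mulr_sumr; apply: eq_bigr => j _; rewrite /zmon rmorphM; ring.
Qed.

Lemma qform_zmonSS v N p : qform (fun i j => zmon i.+1 j.+1 p) v N =
  ((sqmod p)%:C)%C * qform (fun i j => zmon i j p) v N.
Proof.
rewrite /qform mulr_sumr; apply: eq_bigr => i _.
by rewrite mulr_sumr; apply: eq_bigr => j _; rewrite zmonSS; ring.
Qed.

(* [moment_matrix mu] is [fun i j => cRintegral mu (zmon i j)] by conversion. *)
Lemma Re_qform_moment v N : complex.Re (qform M v N) =
  Rintegral mu setT (fun p => Normc.normc (cpoly v N p) ^+ 2).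
Proof.
rewrite (Re_qform_cRintegral (g := @zmon R)); last exact: cintegrable_zmon.
by apply: eq_Rintegral => p _; rewrite qform_zmon Re_mulcJ.
Qed.

Lemma Re_qform_shift v N : complex.Re (qform (shift_mx M) v N) =
  Rintegral mu setT (fun p => sqmod p * Normc.normc (cpoly v N p) ^+ 2).
Proof.
rewrite (Re_qform_cRintegral (g := fun i j => @zmon R i.+1 j.+1)); last first.
  by move=> i j; exact: cintegrable_zmon.
by apply: eq_Rintegral => p _; rewrite qform_zmonSS Re_realcM qform_zmon Re_mulcJ.
Qed.

Lemma integrable_normc_cpoly v N : integrable (fun p => Normc.normc (cpoly v N p) ^+ 2).
Proof.
have := integrable_Re_qform v N cintegrable_zmon.
by apply: (eq_integrable measurableT) => p _; rewrite /= qform_zmon Re_mulcJ.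
Qed.

Lemma integrable_sqmod_normc_cpoly v N :
  integrable (fun p => sqmod p * Normc.normc (cpoly v N p) ^+ 2).
Proof.
have := integrable_Re_qform v N (fun i j => cintegrable_zmon i.+1 j.+1).
by apply: (eq_integrable measurableT) => p _;
  rewrite /= qform_zmonSS Re_realcM qform_zmon Re_mulcJ.
Qed.

Lemma measurable_sqmod : measurable_fun setT (@sqmod R).
Proof.
by apply: measurable_realfun.measurable_funD; apply: measurable_funX;
  [exact: measurable_fst|exact: measurable_snd].
Qed.

Lemma measurable_level t : measurable (level t).
Proof.
have -> : level t = @sqmod R @^-1` `]t, +oo[.
  by apply/seteqP; split => p /=; rewrite in_itv /= andbT.
by rewrite -[_ @^-1` _]setTI; apply: measurable_sqmod => //; exact: measurable_itv.
Qed.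

Lemma measure_fin_num A : measurable A -> mu A \is a fin_num.
Proof.
move=> mA; have : (\int[mu]_p (Defs.modz p ^+ 0)%:E)%E \is a fin_num.
  exact: integrable_fin_num (hmom 0).
under eq_integral do rewrite expr0; rewrite integral_cst // mul1e => muT.
rewrite ge0_fin_numE // (le_lt_trans (le_measure _ _ _ (subsetT A))) ?inE //.
by rewrite -ge0_fin_numE.
Qed.

Lemma beta_le_level t : 0 <= t -> mu (level t) = 0 -> (beta (shift_mx M) M <= t%:E)%E.
Proof.
move=> t0 mu0; apply: ge_ereal_sup => _ [N [v [_ [_ ->]]]]; rewrite lee_fin.
have b0 : 0 <= complex.Re (qform M v N).
  by rewrite Re_qform_moment; apply: Rintegral_ge0 => p _; exact: sqr_ge0.
(* a vector with v M v^* = 0 contributes the junk ratio x / 0 = 0 *)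
have [->|bne0] := eqVneq (complex.Re (qform M v N)) 0; first by rewrite invr0 mulr0.
rewrite ler_pdivrMr ?lt_def ?bne0 // Re_qform_shift Re_qform_moment.
rewrite -RintegralZl ?integrable_normc_cpoly //.
apply: ae_ge0_le_Rintegral => [||p|p|].
- exact: integrable_sqmod_normc_cpoly.
- exact/integrableZl_EFin/integrable_normc_cpoly.
- by rewrite mulr_ge0 ?sqmod_ge0 ?sqr_ge0.
- by rewrite mulr_ge0 ?sqr_ge0.
exists (level t); split => [|//|p /= le_t]; first exact: measurable_level.
by apply: contra_notP le_t => /negP; rewrite -leNgt => ?; rewrite ler_wpM2r ?sqr_ge0.
Qed.

Lemma Re_moment_diag k : complex.Re (M k k) = Rintegral mu setT (fun p => sqmod p ^+ k).
Proof. by apply: eq_Rintegral => p _; rewrite Re_zmon_diag. Qed.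

Lemma moment_diag_ge_level t k : 0 <= t ->
  t ^+ k * fine (mu (level t)) <= complex.Re (M k k).
Proof.
move=> t0; rewrite Re_moment_diag.
apply: le_Rintegral_measure => [|||p||p].
- exact: measurable_level.
- exact: measure_fin_num (measurable_level t).
- have := (cintegrable_zmon k k).1.
  by apply: (eq_integrable measurableT) => p _; rewrite /= Re_zmon_diag.
- by rewrite exprn_ge0 ?sqmod_ge0.
- exact: exprn_ge0.
- by move/ltW => tp; rewrite lerXn2r ?nnegrE ?sqmod_ge0.
Qed.

Lemma moment_ratio_le_beta k :
  ((complex.Re (M k.+1 k.+1) / complex.Re (M k k))%:E <= beta (shift_mx M) M)%E.
Proof.
apply: ereal_sup_ubound; exists k.+1, (fun i => (i == k)%:R); split.
  by move=> i ki; rewrite gtn_eqF.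
by split; [exists k; rewrite eqxx oner_eq0 | rewrite !qform_delta].
Qed.

Lemma ball_sub_level p : p != (0, 0) ->
  exists t e, [/\ 0 < t, 0 < e & ball p e `<=` level t].
Proof.
case: p => a b ab0; set c := Num.max `|a| `|b|.
have c0 : 0 < c by move: ab0; rewrite /c lt_max !normr_gt0 xpair_eqE negb_and.
exists (c ^+ 2 / 4), (c / 2); split; rewrite ?divr_gt0 ?exprn_gt0 //.
move=> [x y] [/=]; rewrite -!ball_normE /ball_ /= /level /sqmod /= => ax yb.
have sqr_gt (u v : R) : `|u - v| < c / 2 -> `|u| = c -> c ^+ 2 / 4 < v ^+ 2.
  move=> uv uc; have := lerB_dist u v; rewrite -(real_normK (num_real v)) uc => cv.
  have : c / 2 < `|v| by lra.
  nra.
have [ca|cb] : c = `|a| \/ c = `|b| by rewrite /c; case: leP; [right|left].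
  by have := sqr_gt _ _ ax (esym ca); have := sqr_ge0 y; lra.
by have := sqr_gt _ _ yb (esym cb); have := sqr_ge0 x; lra.
Qed.

Lemma exists_level_gt0 : ~ finite_set (msupport mu) ->
  exists t, 0 < t /\ (0 < mu (level t))%E.
Proof.
move=> hinf; have [p sp p0] : exists2 p, msupport mu p & p != (0, 0).
  apply: contrapT => nsp; apply: hinf; apply: (sub_finite_set _ (finite_set1 (0, 0))).
  by move=> p sp; apply: contrapT => /eqP p0; apply: nsp; exists p.
have [t [e [t0 e0 sub]]] := ball_sub_level p0.
exists t; split => //; apply: lt_le_trans (sp e e0) _.
have mball : measurable (ball p e) by apply: measurableX; exact: measurable_ball.
by apply: le_measure => //; rewrite inE //; exact: measurable_level.
Qed.

End MomentMatrix.

Section Roots.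
Variable R : realType.

Lemma powRXn_invn (x : R) n : 0 <= x -> (0 < n)%N -> (x ^+ n) `^ n%:R^-1 = x.
Proof.
move=> x0 n0; rewrite -powR_mulrn // -powRrM mulfV ?powRr1 //.
by rewrite pnatr_eq0 -lt0n.
Qed.

Lemma cvg_powR_invn (a : R) : 0 < a -> (fun n : nat => a `^ n%:R^-1) @ \oo --> (1 : R).
Proof.
move=> a0; rewrite -cvg_shiftS.
have -> : (fun n : nat => a `^ n.+1%:R^-1) = expR \o (fun n => harmonic n * ln a).
  by apply/funext => n; rewrite /powR gt_eqF.
have := cvg_comp _ _ (cvgM cvg_harmonic (cvg_cst (ln a))) (@continuous_expR R (0 * ln a)).
by rewrite mul0r expR0; apply.
Qed.

End Roots.

Section RootAsymptotics.
Variable R : realType.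
Variable mu : {measure set (R * R) -> \bar R}.
Hypothesis hinf : ~ finite_set (msupport mu).
Hypothesis hmom : finite_moments mu.
Local Notation M := (moment_matrix mu).
Local Notation m k := (complex.Re (M k k)).
Local Notation b := (beta (shift_mx M) M).

Lemma moment_diag_gt0 k : 0 < m k.
Proof.
have [t [t0 mut]] := exists_level_gt0 hinf.
apply: lt_le_trans (moment_diag_ge_level hmom k (ltW t0)).
rewrite mulr_gt0 ?exprn_gt0 // fine_gt0 // mut /=.
by rewrite ltey_eq measure_fin_num //; exact: measurable_level.
Qed.

Lemma beta_ge0 : (0 <= b)%E.
Proof.
apply: le_trans (moment_ratio_le_beta mu 0).
by rewrite lee_fin divr_ge0 ?ltW ?moment_diag_gt0.
Qed.

Lemma moment_diag_le_beta (x : R) : b = x%:E -> forall n, m n <= m 0 * x ^+ n.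
Proof.
move=> bx; elim=> [|n IH]; first by rewrite mulr1.
have := moment_ratio_le_beta mu n; rewrite bx lee_fin ler_pdivrMr ?moment_diag_gt0 //.
move/le_trans; apply; rewrite exprS mulrCA ler_wpM2l //.
by rewrite -lee_fin -bx beta_ge0.
Qed.

Lemma root_moment_le (x : R) n : b = x%:E -> (0 < n)%N ->
  m n `^ n%:R^-1 <= m 0 `^ n%:R^-1 * x.
Proof.
move=> bx n0; have x0 : 0 <= x by rewrite -lee_fin -bx beta_ge0.
have m0 := ltW (moment_diag_gt0 0).
rewrite -[X in _ * X](powRXn_invn x0 n0) -powRM ?exprn_ge0 //.
apply: ge0_ler_powR; rewrite ?nnegrE ?invr_ge0 ?mulr_ge0 ?exprn_ge0 //.
  exact: ltW (moment_diag_gt0 n).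
exact: moment_diag_le_beta.
Qed.

Lemma root_moment_ge t n : 0 <= t -> (0 < n)%N ->
  t * fine (mu (level t)) `^ n%:R^-1 <= m n `^ n%:R^-1.
Proof.
move=> t0 n0; have a0 : 0 <= fine (mu (level t)) by rewrite fine_ge0.
rewrite -[X in X * _](powRXn_invn t0 n0) -powRM ?exprn_ge0 //.
apply: ge0_ler_powR; rewrite ?nnegrE ?invr_ge0 ?mulr_ge0 ?exprn_ge0 //.
  exact: ltW (moment_diag_gt0 n).
exact: moment_diag_ge_level.
Qed.

Lemma near_root_moment_lt (x s : R) : b = x%:E -> x < s ->
  \forall n \near \oo, m n `^ n%:R^-1 < s.
Proof.
move=> bx xs; have ev : \forall n \near \oo, m 0 `^ n%:R^-1 * x < s.
  apply: (cvgr_lt (1 * x)); last by rewrite mul1r.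
  exact: cvgM (cvg_powR_invn (moment_diag_gt0 0)) (cvg_cst x).
near=> n; apply: le_lt_trans (root_moment_le bx _) _.
  by near: n; exact: nbhs_infty_gt.
by near: n.
Unshelve. all: by end_near.
Qed.

Lemma near_root_moment_gt (s : R) : (s%:E < b)%E ->
  \forall n \near \oo, s < m n `^ n%:R^-1.
Proof.
move=> sb; have [s0|s0] := ltP s 0.
  by near=> n; apply: lt_le_trans s0 _; exact: powR_ge0.
have [t [st t0 tb]] : exists t, [/\ s < t, 0 < t & (t%:E < b)%E].
  move: sb; case: b => [x| |] sx.
  - by exists ((s + x) / 2); rewrite lte_fin in sx; split; rewrite ?lte_fin; lra.
  - by exists (s + 1); split; rewrite ?ltry //; lra.
  - by rewrite ltNge leNye in sx.
have mut : (0 < mu (level t))%E.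
  rewrite lt0e measure_ge0 andbT; apply: contraTN tb => /eqP mu0.
  by rewrite -leNgt beta_le_level ?ltW.
have a0 : 0 < fine (mu (level t)).
  by rewrite fine_gt0 // mut ltey_eq measure_fin_num //; exact: measurable_level.
have ev : \forall n \near \oo, s < t * fine (mu (level t)) `^ n%:R^-1.
  apply: (cvgr_gt (t * 1)); last by rewrite mulr1.
  exact: cvgM (cvg_cst t) (cvg_powR_invn a0).
near=> n; apply: (lt_le_trans _ (root_moment_ge (ltW t0) _)).
  by near: n.
by near: n; exact: nbhs_infty_gt.
Unshelve. all: by end_near.
Qed.

End RootAsymptotics.

Theorem corollary5 (R : realType) (mu : {measure set (R * R) -> \bar R})
  (hinf : ~ finite_set (msupport mu)) (hmom : finite_moments mu) :
  (fun n : nat => ((complex.Re (moment_matrix mu n n)) `^ (n%:R)^-1)%:E)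
    @ \oo --> beta (shift_mx (moment_matrix mu)) (moment_matrix mu).
Proof.
have := beta_ge0 hinf hmom.
case Eb : (beta _ _) => [x| |] // _.
- apply/fine_cvgP; split; first exact: nearW.
  apply/cvgrPdist_lt => e e0; near=> n; rewrite ltr_distlC; apply/andP; split.
    by near: n; apply: near_root_moment_gt hinf hmom _ _; rewrite Eb lte_fin; lra.
  by near: n; apply: near_root_moment_lt hinf hmom _ _ Eb _; lra.
- apply/cvgeyPge => r; near=> n; rewrite lee_fin ltW //; near: n.
  by apply: near_root_moment_gt hinf hmom _ _; rewrite Eb ltry.
Unshelve. all: by end_near.
Qed.
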